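(* Consider multiclass data $(x,y)$ with $x\in\mathcal{X}\subseteq\mathbb{R}^d$ drawn from a fixed distribution and labels $y\in\{1,\dots,k\}$, where $k\ge2$. A binary decision tree is grown top-down from a single root leaf. At each step $t=1,2,\dots$, the leaf $m$ of largest weight is split into two children using a hypothesis $h_m:\mathcal{X}\to\{-1,1\}$: $h_m(x)=1$ sends $x$ to the right child and $h_m(x)=-1$ sends it to the left child. After $t$ steps the tree has $t$ internal nodes. Assume the Weak Hypothesis Assumption holds with parameter $\gamma$: there is $\gamma>0$ such that for every split node $m$, \[ \gamma\le\min(\beta_m,1-\beta_m)\quad\text{and}\quad \tfrac12 J(h_m)=\sum_{i=1}^k\pi_{m,i}\,|P_{m,i}-\beta_m|\ge\gamma . \] Then for any $\alpha\in[0,2(1-\frac1k)]$, the Gini-entropy after $t$ splits satisfies $G_t^g\le\alpha$ whenever \[ t\ \ge\ \left(\frac{2(1-\frac1k)}{\alpha}\right)^{\frac{2(1-\gamma)^2}{\gamma^2\log_2 e}(k-1)}. \]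
   Context: For a node $m$, $w_m$ is the probability that $x$ reaches $m$. $\pi_{m,i}$ is the probability that $x$ has label $i$ given that it reaches $m$. $\beta_m=P(h_m(x)>0)$ and $P_{m,i}=P(h_m(x)>0\mid i)$, both computed for $x$ conditioned on reaching $m$ (the latter also conditioned on label $i$). Thus \[ J(h_m)=2\sum_i\pi_{m,i}\,|\beta_m-P_{m,i}|. \] For the tree after $t$ splits with leaf set $\mathcal{L}$, \[ G_t^g=\sum_{l\in\mathcal{L}}w_l\sum_{i=1}^k\pi_{l,i}(1-\pi_{l,i}). \] *)

From HB Require Import structures.
From mathcomp Require Import all_boot all_order all_algebra.
From mathcomp Require Import all_classical all_reals all_analysis.
Set Implicit Arguments. Unset Strict Implicit. Unset Printing Implicit Defensive.
Import Order.TTheory GRing.Theory Num.Theory.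
Local Open Scope classical_set_scope.
Local Open Scope ring_scope.

Section TreeDefs.
Context {R : realType} {d : measure_display} {T : measurableType d}
  (P : probability T R) {dim k : nat} (X : T -> 'rV[R]_dim) (Y : T -> 'I_k).

(* a node/leaf is the set of inputs x that reach it *)
Definition wt (m : set 'rV[R]_dim) : R := fine (P (X @^-1` m)).

Definition wlab (m : set 'rV[R]_dim) (i : 'I_k) : R :=
  fine (P (X @^-1` m `&` Y @^-1` [set i])).

Definition pi_ (m : set 'rV[R]_dim) (i : 'I_k) : R := wlab m i / wt m.

Definition beta_ (h : 'rV[R]_dim -> R) (m : set 'rV[R]_dim) : R :=
  fine (P (X @^-1` (m `&` [set x | 0 < h x]))) / wt m.

Definition Pmi (h : 'rV[R]_dim -> R) (m : set 'rV[R]_dim) (i : 'I_k) : R :=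
  fine (P (X @^-1` (m `&` [set x | 0 < h x]) `&` Y @^-1` [set i])) / wlab m i.

Definition Jh (h : 'rV[R]_dim -> R) (m : set 'rV[R]_dim) : R :=
  2 * \sum_(i < k) pi_ m i * `|beta_ h m - Pmi h m i|.

Definition WHA (gamma : R) (h : 'rV[R]_dim -> R) (m : set 'rV[R]_dim) : Prop :=
  gamma <= Num.min (beta_ h m) (1 - beta_ h m) /\
  gamma <= \sum_(i < k) pi_ m i * `|Pmi h m i - beta_ h m|.

Definition gini (leaves : seq (set 'rV[R]_dim)) : R :=
  \sum_(l <- leaves) wt l * \sum_(i < k) pi_ l i * (1 - pi_ l i).

End TreeDefs.

Definition split_leaf {R : realType} {dim : nat} (h : 'rV[R]_dim -> R)
  (m : set 'rV[R]_dim) : seq (set 'rV[R]_dim) :=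
  [:: m `&` [set x | h x < 0]; m `&` [set x | 0 < h x]].

Fixpoint leaves {R : realType} {dim : nat} (hs : nat -> 'rV[R]_dim -> R)
  (js : nat -> nat) (t : nat) : seq (set 'rV[R]_dim) :=
  match t with
  | 0 => [:: setT]
  | s.+1 => let L := leaves hs js s in
            let j := js s in
            take j L ++ split_leaf (hs s) (nth set0 L j) ++ drop j.+1 L
  end.

(* Splitting a leaf of weight [w] under the weak hypothesis assumption lowers
   the Gini-entropy by at least [4 w gamma^2 / k]: the Gini term of a label with
   masses [a] in the leaf and [b] in its right child of weight [wR] drops by
   [(b w - a wR)^2 / (w wR (w - wR)) >= 4 w (pi_i |P_i - beta|)^2], and
   Cauchy-Schwarz turns [sum_i pi_i |P_i - beta| >= gamma] into
   [sum_i (pi_i |P_i - beta|)^2 >= gamma^2 / k].  After [s] splits there are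
   [s + 1] leaves, each contributing at most [w_l (1 - 1/k)], and the split leaf
   is the heaviest, so [G_(s+1) <= (1 - c / (s + 1)) G_s] with
   [c = 4 gamma^2 / (k - 1)].  Since [1 - c/n <= (n / (n + 1))^c], induction
   gives [G_s <= (1 - 1/k) (s + 1)^(-c)].  Finally [c] times the exponent of the
   statement is [8 (1 - gamma)^2 ln 2 >= 1] because [gamma <= 1/2], whence
   [G_t <= (1 - 1/k) alpha / (2 (1 - 1/k)) <= alpha]. *)

From HB Require Import structures.
From mathcomp Require Import all_boot all_order all_algebra.
From mathcomp Require Import all_classical all_reals all_analysis.
From mathcomp Require Import ring lra zify.
Import Order.TTheory GRing.Theory Num.Theory.
Local Open Scope classical_set_scope.
Local Open Scope ring_scope.
Set Implicit Arguments.
Unset Strict Implicit.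

Section Impurity.
Variable R : realFieldType.

Lemma sqr_sum_le_card_sum_sqr (k : nat) (u : 'I_k -> R) :
  (\sum_(i < k) u i) ^+ 2 <= k%:R * \sum_(i < k) u i ^+ 2.
Proof.
case: k u => [|k] u; first by rewrite !big_ord0 expr0n mul0r.
set S := \sum_(i < k.+1) u i.
have sum_dev : \sum_(i < k.+1) (k.+1%:R * u i - S) ^+ 2
               = k.+1%:R * (k.+1%:R * \sum_(i < k.+1) u i ^+ 2 - S ^+ 2).
  have dev i : (k.+1%:R * u i - S) ^+ 2
               = k.+1%:R ^+ 2 * u i ^+ 2 - 2 * k.+1%:R * S * u i + S ^+ 2 by ring.
  rewrite (eq_bigr _ (fun i _ => dev i)) big_split sumrB /= -!mulr_sumr.
  by rewrite sumr_const card_ord -/S; ring.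
have : 0 <= \sum_(i < k.+1) (k.+1%:R * u i - S) ^+ 2.
  by apply: sumr_ge0 => i _; exact: sqr_ge0.
by rewrite sum_dev pmulr_rge0 ?ltr0n // subr_ge0.
Qed.

(* For a label of mass [a] in a node of weight [w] and mass [b] in its right
   child of weight [wR], the left side is [4 w (pi_i |P_i - beta|)^2]. *)
Lemma label_impurity_decrease_ge (a b w wR : R) : 0 < wR < w ->
  4 * w * (a / w * `|b / a - wR / w|) ^+ 2 <=
  w * (a / w * (1 - a / w))
  - (w - wR) * ((a - b) / (w - wR) * (1 - (a - b) / (w - wR)))
  - wR * (b / wR * (1 - b / wR)).
Proof.
case/andP=> wR_gt0 wRw; have w_gt0 : 0 < w := lt_trans wR_gt0 wRw.
have wL_gt0 : 0 < w - wR by rewrite subr_gt0.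
have [->|a_neq0] := eqVneq a 0.
  rewrite !mul0r expr0n /= mulr0 -subr_ge0.
  have -> : w * 0 - (w - wR) * ((0 - b) / (w - wR) * (1 - (0 - b) / (w - wR)))
            - wR * (b / wR * (1 - b / wR)) - 0
            = b ^+ 2 / (w - wR) + b ^+ 2 / wR.
    by field; rewrite !gt_eqF.
  by rewrite addr_ge0 // divr_ge0 ?sqr_ge0 // ltW.
(* the defect of [4 wR (w - wR) <= w^2] is [(w - 2 wR)^2] *)
rewrite exprMn real_normK ?num_real // -subr_ge0.
set D := b * w - a * wR.
have -> : w * (a / w * (1 - a / w))
          - (w - wR) * ((a - b) / (w - wR) * (1 - (a - b) / (w - wR)))
          - wR * (b / wR * (1 - b / wR))
          - 4 * w * ((a / w) ^+ 2 * (b / a - wR / w) ^+ 2)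
          = D ^+ 2 * (w - 2 * wR) ^+ 2 / (w ^+ 3 * wR * (w - wR)).
  by rewrite /D; field; rewrite a_neq0 !gt_eqF.
apply: divr_ge0; first by rewrite mulr_ge0 ?sqr_ge0.
by rewrite ltW // !mulr_gt0 // exprn_gt0.
Qed.

Lemma impurity_decrease_ge (k : nat) (a b : 'I_k -> R) (w wR gamma : R) :
  0 < wR < w -> 0 <= gamma ->
  gamma <= \sum_(i < k) a i / w * `|b i / a i - wR / w| ->
  4 * w * (gamma ^+ 2 / k%:R) <=
  w * \sum_(i < k) (a i / w * (1 - a i / w))
  - (w - wR) * \sum_(i < k) ((a i - b i) / (w - wR) * (1 - (a i - b i) / (w - wR)))
  - wR * \sum_(i < k) (b i / wR * (1 - b i / wR)).
Proof.
move=> wRw gamma_ge0 gamma_le.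
have w_ge0 : 0 <= w by case/andP: wRw => wR0 /(lt_trans wR0)/ltW.
set u := fun i => a i / w * `|b i / a i - wR / w|.
rewrite !mulr_sumr -!sumrB.
apply: (@le_trans _ _ (\sum_(i < k) 4 * w * u i ^+ 2)); last first.
  by apply: ler_sum => i _; exact: label_impurity_decrease_ge.
rewrite -mulr_sumr ler_wpM2l ?mulr_ge0 //.
have [k0|k_gt0] := posnP k.
  have -> : k%:R = 0 :> R by rewrite k0.
  by rewrite invr0 mulr0 sumr_ge0 // => i _; exact: sqr_ge0.
rewrite ler_pdivrMr ?ltr0n // mulrC.
apply: le_trans (sqr_sum_le_card_sum_sqr u).
by rewrite lerXn2r ?nnegrE // (le_trans gamma_ge0).
Qed.

Lemma weighted_impurity_le (k : nat) (a : 'I_k -> R) (w : R) : (0 < k)%N ->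
  0 <= w -> \sum_(i < k) a i = w ->
  w * \sum_(i < k) (a i / w * (1 - a i / w)) <= w * (1 - k%:R^-1).
Proof.
move=> k_gt0 w_ge0 sum_a.
have [->|w_neq0] := eqVneq w 0; first by rewrite !mul0r.
have k_pos : 0 < k%:R :> R by rewrite ltr0n.
have term i : w * (a i / w * (1 - a i / w)) = a i - a i ^+ 2 / w.
  by field.
rewrite mulr_sumr (eq_bigr _ (fun i _ => term i)) sumrB sum_a -mulr_suml.
have := sqr_sum_le_card_sum_sqr a; rewrite sum_a => cs.
rewrite -subr_ge0.
have -> : w * (1 - k%:R^-1) - (w - (\sum_(i < k) a i ^+ 2) / w)
          = (k%:R * \sum_(i < k) a i ^+ 2 - w ^+ 2) / (k%:R * w).
  by field; rewrite w_neq0 gt_eqF.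
by rewrite divr_ge0 ?subr_ge0 // mulr_ge0 // ltW.
Qed.

End Impurity.

Section PowerDecay.
Variable R : realType.

Lemma expR_decay_step (c n : R) : 0 <= c -> 0 < n ->
  (1 - c / n) * expR (- c * ln n) <= expR (- c * ln (n + 1)).
Proof.
move=> c_ge0 n_gt0.
have ln_gap : ln (n + 1) - ln n <= n^-1.
  rewrite -ln_div ?posrE ?addr_gt0 // mulrDl divff ?gt_eqF // mul1r.
  by rewrite le_ln1Dx // (lt_trans (ltrN10 R)) ?invr_gt0.
apply: (@le_trans _ _ (expR (- (c / n)) * expR (- c * ln n))).
  by apply: ler_wpM2r; rewrite ?expR_ge0 // expR_ge1Dx.
rewrite -expRD ler_expR.
have -> : - c * ln (n + 1) = - c * ln n - c * (ln (n + 1) - ln n) by ring.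
by rewrite addrC lerD2l lerN2 ler_wpM2l.
Qed.

Lemma decay_recurrence_step (G G' q w c n : R) :
  0 <= q -> 0 <= c <= n -> 0 < n ->
  G <= n * w * q -> G' <= G - c * w * q ->
  G <= q * expR (- c * ln n) -> G' <= q * expR (- c * ln (n + 1)).
Proof.
move=> q_ge0 /andP[c_ge0 c_le_n] n_gt0 G_le_max G'_le G_le.
have G'_le_G : G' <= G * (1 - c / n).
  apply: (le_trans G'_le); rewrite mulrBr mulr1 lerD2l lerN2.
  have -> : c * w * q = c / n * (n * w * q) by field; rewrite gt_eqF.
  by rewrite mulrC; apply: ler_wpM2l => //; rewrite divr_ge0 // ltW.
have shrink_ge0 : 0 <= 1 - c / n by rewrite subr_ge0 ler_pdivrMr // mul1r.
apply: (le_trans G'_le_G); apply: (le_trans (ler_wpM2r shrink_ge0 G_le)).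
by rewrite -mulrA; apply: ler_wpM2l; rewrite // mulrC expR_decay_step.
Qed.

Lemma ln2_ge_half : 2^-1 <= ln (2 : R).
Proof.
rewrite -ler_expR lnK ?posrE //.
have exp_half_inv : expR (2^-1 : R) * expR (- 2^-1) = 1 by rewrite -expRD subrr expR0.
have := expR_ge1Dx (- 2^-1 : R); have := expR_gt0 (2^-1 : R).
nra.
Qed.

Lemma decay_rate_ge0_le1 (k gamma : R) :
  2 <= k -> 0 < gamma -> 2 * gamma <= 1 -> 0 <= 4 * gamma ^+ 2 / (k - 1) <= 1.
Proof.
move=> k_ge2 gamma_gt0 gamma_le_half.
have k1_gt0 : 0 < k - 1 by lra.
apply/andP; split; first by rewrite divr_ge0 ?mulr_ge0 ?sqr_ge0 // ltW.
by rewrite ler_pdivrMr // mul1r; nra.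
Qed.

Lemma decay_rate_mul_exponent_ge1 (k gamma : R) :
  2 <= k -> 0 < gamma -> 2 * gamma <= 1 ->
  1 <= 4 * gamma ^+ 2 / (k - 1)
       * ((2 * (1 - gamma) ^+ 2) / (gamma ^+ 2 * (ln (expR 1) / ln 2)) * (k - 1)).
Proof.
move=> k_ge2 gamma_gt0 gamma_le_half.
have ln2_gt0 : 0 < ln (2 : R) by have := ln2_ge_half; lra.
have -> : 4 * gamma ^+ 2 / (k - 1)
          * ((2 * (1 - gamma) ^+ 2) / (gamma ^+ 2 * (ln (expR 1) / ln 2)) * (k - 1))
          = 8 * (1 - gamma) ^+ 2 * ln 2.
  by rewrite expRK; field; rewrite !gt_eqF // subr_gt0 (lt_le_trans _ k_ge2) ?ltr1n.
have := ln2_ge_half; nra.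
Qed.

Lemma decay_le_of_powR_le (q alpha c E t : R) :
  0 < alpha -> alpha <= 2 * q -> 0 <= c -> 1 <= c * E ->
  (2 * q / alpha) `^ E <= t -> q * expR (- c * ln (t + 1)) <= alpha.
Proof.
move=> alpha_gt0 alpha_le c_ge0 cE_ge1 t_ge.
have q_gt0 : 0 < q by lra.
set B := 2 * q / alpha in t_ge *.
have B_ge1 : 1 <= B by rewrite /B ler_pdivlMr // mul1r.
have B_gt0 : 0 < B by lra.
have lnB_le : ln B <= c * ln (t + 1).
  have t_ge' : expR (E * ln B) <= t by move: t_ge; rewrite /powR gt_eqF.
  have ElnB_le : E * ln B <= ln (t + 1).
    by rewrite -ler_expR lnK ?posrE; [lra | have := expR_gt0 (E * ln B); lra].
  apply: (@le_trans _ _ (c * (E * ln B))).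
    by rewrite mulrA ler_peMl // ln_ge0.
  by rewrite ler_wpM2l.
have : expR (- c * ln (t + 1)) <= B^-1.
  by rewrite -[B^-1]lnK ?posrE ?invr_gt0 // ler_expR lnV ?posrE // mulNr lerN2.
move=> decay_le; apply: (le_trans (ler_wpM2l (ltW q_gt0) decay_le)).
have -> : q * B^-1 = alpha / 2 by rewrite /B; field; rewrite !gt_eqF.
lra.
Qed.

End PowerDecay.

Lemma preimage_split (R : realType) (T U : Type) (X : T -> U) (h : U -> R)
    (m : set U) (S : set T) :
  (forall x, h x = 1 \/ h x = -1) ->
  X @^-1` m `&` S = (X @^-1` (m `&` [set x | h x < 0]) `&` S)
                    `|` (X @^-1` (m `&` [set x | 0 < h x]) `&` S).
Proof.
move=> h_sign; apply/seteqP; split => z /=; last by case=> -[[? _] ?].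
move=> [mz Sz]; case: (h_sign (X z)) => ->; [right|left];
  by rewrite ?ltr01 ?ltrN10.
Qed.

Lemma preimage_split_disjoint (R : realType) (T U : Type) (X : T -> U)
    (h : U -> R) (m : set U) (S : set T) :
  (X @^-1` (m `&` [set x | h x < 0]) `&` S)
  `&` (X @^-1` (m `&` [set x | 0 < h x]) `&` S) = set0.
Proof.
apply/seteqP; split => z //= [[[_ neg] _] [[_ pos] _]].
by have := lt_trans neg pos; rewrite ltxx.
Qed.

Section LeafWeights.
Variables (R : realType) (d : measure_display) (T : measurableType d).
Variables (P : probability T R) (dim k : nat).
Variables (X : T -> 'rV[R]_dim) (Y : T -> 'I_k).
Hypothesis mY : forall i, measurable (Y @^-1` [set i]).

Definition leaf_gini (l : set 'rV[R]_dim) : R :=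
  wt P X l * \sum_(i < k) pi_ P X Y l i * (1 - pi_ P X Y l i).

Lemma fine_measureU (A B : set T) : measurable A -> measurable B ->
  A `&` B = set0 -> fine (P (A `|` B)) = fine (P A) + fine (P B).
Proof. by move=> mA mB AB; rewrite measureU // fineD // fin_num_measure. Qed.

Lemma giniE (L : seq (set 'rV[R]_dim)) :
  gini P X Y L = \sum_(l <- L) leaf_gini l.
Proof. by []. Qed.

Lemma sum_wlab (l : set 'rV[R]_dim) : measurable (X @^-1` l) ->
  \sum_(i < k) wlab P X Y l i = wt P X l.
Proof.
move=> ml; rewrite /wlab /wt sum_fine => [|i _]; last exact/fin_num_measure/measurableI.
congr fine; rewrite -measure_semi_additive_ord.
- congr (P _); apply/seteqP; split => [x|x lx].
    by elim/big_ind: _ => //= [A B HA HB [/HA|/HB]|i _ []].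
  by rewrite (bigD1 (Y x)) //=; left.
- by move=> i; exact: measurableI.
- apply/trivIsetP => i j _ _ ij; apply/seteqP; split => x //= [[_ /= ->] [_ /= E]].
  by move: ij; rewrite E eqxx.
- by apply: bigsetU_measurable => i _; exact: measurableI.
Qed.

Lemma leaf_gini_le (l : set 'rV[R]_dim) : (0 < k)%N -> measurable (X @^-1` l) ->
  leaf_gini l <= wt P X l * (1 - k%:R^-1).
Proof.
move=> k_gt0 ml; apply: weighted_impurity_le => //; last exact: sum_wlab.
exact: fine_ge0.
Qed.

Lemma gini_le_size_mul (L : seq (set 'rV[R]_dim)) (w : R) : (0 < k)%N ->
  {in L, forall l, measurable (X @^-1` l)} -> {in L, forall l, wt P X l <= w} ->
  gini P X Y L <= (size L)%:R * w * (1 - k%:R^-1).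
Proof.
move=> k_gt0 L_meas L_wt.
have q_ge0 : 0 <= 1 - k%:R^-1 :> R by rewrite subr_ge0 invf_le1 ?ler1n ?ltr0n.
apply: (@le_trans _ _ (\sum_(l <- L) w * (1 - k%:R^-1))).
  rewrite giniE big_seq [leRHS]big_seq; apply: ler_sum => l lL.
  apply: le_trans (leaf_gini_le k_gt0 (L_meas l lL)) _.
  by rewrite ler_wpM2r // L_wt.
by rewrite big_const_seq count_predT iter_addr_0 -mulrA mulr_natl.
Qed.

Lemma gini_split_leaf (h : 'rV[R]_dim -> R) (L : seq (set 'rV[R]_dim)) (j : nat) :
  (j < size L)%N ->
  let m := nth set0 L j in
  gini P X Y (take j L ++ split_leaf h m ++ drop j.+1 L) =
  gini P X Y L - leaf_gini m + leaf_gini (m `&` [set x | h x < 0])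
  + leaf_gini (m `&` [set x | 0 < h x]).
Proof.
move=> j_lt m.
have L_split : L = take j L ++ m :: drop j.+1 L.
  by rewrite -(drop_nth set0 j_lt) cat_take_drop.
rewrite !giniE [in RHS]L_split !big_cat !big_cons big_nil /=.
by rewrite addr0; ring.
Qed.

Variables (h : 'rV[R]_dim -> R) (m : set 'rV[R]_dim).
Hypotheses (mm : measurable (X @^-1` m))
  (mpos : measurable (X @^-1` [set x | 0 < h x]))
  (mneg : measurable (X @^-1` [set x | h x < 0]))
  (h_sign : forall x, h x = 1 \/ h x = -1).

Lemma wt_split :
  wt P X m = wt P X (m `&` [set x | h x < 0]) + wt P X (m `&` [set x | 0 < h x]).
Proof.
rewrite /wt -[X @^-1` m]setIT (preimage_split _ _ _ h_sign) !setIT.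
apply: fine_measureU; try exact: measurableI.
by have := preimage_split_disjoint X h m setT; rewrite !setIT.
Qed.

Lemma wlab_split i :
  wlab P X Y m i
  = wlab P X Y (m `&` [set x | h x < 0]) i + wlab P X Y (m `&` [set x | 0 < h x]) i.
Proof.
rewrite /wlab (preimage_split _ _ _ h_sign).
by apply: fine_measureU; rewrite ?preimage_split_disjoint //;
  apply: measurableI => //; exact: measurableI.
Qed.

Lemma WHA_gamma_le_half gamma : WHA P X Y gamma h m -> 2 * gamma <= 1.
Proof. by case; rewrite le_min => /andP[? ?] _; lra. Qed.

Lemma leaf_gini_split_ge gamma : 0 < gamma -> WHA P X Y gamma h m ->
  4 * wt P X m * (gamma ^+ 2 / k%:R) <=
  leaf_gini m - leaf_gini (m `&` [set x | h x < 0])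
  - leaf_gini (m `&` [set x | 0 < h x]).
Proof.
move=> gamma_gt0 []; rewrite le_min => /andP[gamma_le_beta gamma_le_1beta] gamma_le_sum.
set w := wt P X m; set wR := wt P X (m `&` [set x | 0 < h x]).
have wL : wt P X (m `&` [set x | h x < 0]) = w - wR by rewrite /w wt_split addrK.
have labL i : wlab P X Y (m `&` [set x | h x < 0]) i
              = wlab P X Y m i - wlab P X Y (m `&` [set x | 0 < h x]) i.
  by rewrite (wlab_split i) addrK.
have beta_E : beta_ P X h m = wR / w by [].
rewrite beta_E in gamma_le_beta gamma_le_1beta.
have w_gt0 : 0 < w.
  rewrite lt_def fine_ge0 // andbT; apply/eqP => w0.
  by move: gamma_le_beta; rewrite w0 invr0 mulr0 leNgt gamma_gt0.
have wR_gt0 : 0 < wR.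
  by have := lt_le_trans gamma_gt0 gamma_le_beta; rewrite pmulr_lgt0 ?invr_gt0.
have wR_lt_w : wR < w.
  have := lt_le_trans gamma_gt0 gamma_le_1beta.
  by rewrite subr_gt0 ltr_pdivrMr // mul1r.
set a := wlab P X Y m; set b := wlab P X Y (m `&` [set x | 0 < h x]).
have piL i : pi_ P X Y (m `&` [set x | h x < 0]) i = (a i - b i) / (w - wR).
  by rewrite /pi_ labL wL.
rewrite /leaf_gini wL [S in _ - (_ * S) - _](eq_bigr _ (fun i _ => congr1
  (fun p => p * (1 - p)) (piL i))).
apply: impurity_decrease_ge => //; [exact/andP | exact: ltW].
Qed.

End LeafWeights.

Section GreedyTree.
Variables (R : realType) (d : measure_display) (T : measurableType d).
Variables (P : probability T R) (dim k : nat).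
Variables (X : T -> 'rV[R]_dim) (Y : T -> 'I_k).
Variables (hs : nat -> 'rV[R]_dim -> R) (js : nat -> nat) (t : nat).
Hypotheses (mpos : forall s, (s < t)%N -> measurable (X @^-1` [set x | 0 < hs s x]))
  (mneg : forall s, (s < t)%N -> measurable (X @^-1` [set x | hs s x < 0])).

Local Notation L := (leaves hs js).

Lemma size_leaves s : (forall r, (r < s)%N -> (js r < size (L r))%N) ->
  size (L s) = s.+1.
Proof.
elim: s => [//|s IH] js_lt /=.
have sizeL : size (L s) = s.+1 by apply: IH => r /ltnW; exact: js_lt.
have j_lt := js_lt s (ltnSn s); rewrite sizeL in j_lt.
by rewrite size_cat size_take sizeL j_lt /= size_drop sizeL; lia.
Qed.

Lemma leaves_measurable s : (s <= t)%N ->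
  {in L s, forall l, measurable (X @^-1` l)}.
Proof.
elim: s => [_ l|s IH s_lt l] /=.
  by rewrite inE => /eqP ->; rewrite preimage_setT.
have nth_meas : measurable (X @^-1` nth set0 (L s) (js s)).
  have [j_lt|j_ge] := ltnP (js s) (size (L s)).
    exact/(IH (ltnW s_lt))/mem_nth.
  by rewrite nth_default // preimage_set0.
rewrite !mem_cat !inE => /or4P[/mem_take|/eqP->|/eqP->|/mem_drop].
- exact: IH (ltnW s_lt) l.
- exact: measurableI (mneg s_lt).
- exact: measurableI (mpos s_lt).
- exact: IH (ltnW s_lt) l.
Qed.

Variable gamma : R.
Hypotheses (k_ge2 : (2 <= k)%N) (mY : forall i, measurable (Y @^-1` [set i]))
  (gamma_gt0 : 0 < gamma)
  (h_sign : forall s, (s < t)%N -> forall x, hs s x = 1 \/ hs s x = -1)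
  (greedy : forall s, (s < t)%N ->
     (js s < size (L s))%N /\
     forall j, (j < size (L s))%N ->
       wt P X (nth set0 (L s) j) <= wt P X (nth set0 (L s) (js s)))
  (weak : forall s, (s < t)%N -> WHA P X Y gamma (hs s) (nth set0 (L s) (js s))).

Lemma gini_leaves_le_decay s : (s <= t)%N ->
  gini P X Y (L s)
  <= (1 - k%:R^-1) * expR (- (4 * gamma ^+ 2 / (k%:R - 1)) * ln s.+1%:R).
Proof.
have k_gt0 : (0 < k)%N by apply: leq_trans k_ge2.
have k_ge2R : 2 <= k%:R :> R by rewrite (ler_nat _ 2).
have q_ge0 : 0 <= 1 - k%:R^-1 :> R by rewrite subr_ge0 invf_le1 ?ler1n ?ltr0n.
elim: s => [_|s IH s_lt].
  rewrite ln1 mulr0 expR0 mulr1 giniE big_seq1.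
  apply: le_trans (leaf_gini_le P mY k_gt0 _) _; first by rewrite preimage_setT.
  by rewrite /wt preimage_setT probability_setT mul1r.
have [j_lt greedy_s] := greedy s_lt.
set m := nth set0 (L s) (js s) in greedy_s *.
have L_meas := leaves_measurable (ltnW s_lt).
have m_meas : measurable (X @^-1` m) by exact/L_meas/mem_nth.
have size_s : size (L s) = s.+1.
  by apply: size_leaves => r r_lt; case: (greedy (ltn_trans r_lt s_lt)).
have G_le_max : gini P X Y (L s) <= s.+1%:R * wt P X m * (1 - k%:R^-1).
  rewrite -size_s; apply: gini_le_size_mul => // l /(nthP set0)[j j_lt' <-].
  exact: greedy_s.
have decrease := leaf_gini_split_ge mY m_meas (mpos s_lt) (mneg s_lt)
  (h_sign s_lt) gamma_gt0 (weak s_lt).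
have gamma_le_half := WHA_gamma_le_half (weak s_lt).
rewrite [L s.+1]/= gini_split_leaf // -/m -[s.+2%:R]natr1.
apply: (decay_recurrence_step q_ge0 _ _ G_le_max _ (IH (ltnW s_lt))).
- have /andP[c_ge0 c_le1] := decay_rate_ge0_le1 k_ge2R gamma_gt0 gamma_le_half.
  by rewrite c_ge0 (le_trans c_le1) // ler1n.
- by rewrite ltr0n.
- have -> : 4 * gamma ^+ 2 / (k%:R - 1) * wt P X m * (1 - k%:R^-1)
            = 4 * wt P X m * (gamma ^+ 2 / k%:R).
    by field; rewrite !gt_eqF ?subr_gt0 ?ltr0n //; lra.
  lra.
Qed.

End GreedyTree.

Theorem theorem2 (R : realType) (d : measure_display) (T : measurableType d)
  (P : probability T R) (dim k : nat) (X : T -> 'rV[R]_dim) (Y : T -> 'I_k)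
  (hs : nat -> 'rV[R]_dim -> R) (js : nat -> nat) (gamma alpha : R) (t : nat) :
  (2 <= k)%N ->
  (forall i : 'I_k, measurable (Y @^-1` [set i])) ->
  0 < gamma ->
  (* every split hypothesis is {-1,1}-valued with measurable decision sets *)
  (forall s, (s < t)%N -> forall x, hs s x = 1 \/ hs s x = -1) ->
  (forall s, (s < t)%N -> measurable (X @^-1` [set x | 0 < hs s x])) ->
  (forall s, (s < t)%N -> measurable (X @^-1` [set x | hs s x < 0])) ->
  (* at each step the split leaf is a leaf of largest weight *)
  (forall s, (s < t)%N ->
     (js s < size (leaves hs js s))%N /\
     forall j, (j < size (leaves hs js s))%N ->
       wt P X (nth set0 (leaves hs js s) j)
       <= wt P X (nth set0 (leaves hs js s) (js s))) ->
  (* Weak Hypothesis Assumption at every split node *)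
  (forall s, (s < t)%N ->
     WHA P X Y gamma (hs s) (nth set0 (leaves hs js s) (js s))) ->
  0 < alpha -> alpha <= 2 * (1 - k%:R^-1) ->
  ((2 * (1 - k%:R^-1)) / alpha)
    `^ ((2 * (1 - gamma) ^+ 2) / (gamma ^+ 2 * (ln (expR 1) / ln 2)) * (k%:R - 1))
    <= t%:R ->
  gini P X Y (leaves hs js t) <= alpha.
Proof.
move=> k_ge2 mY gamma_gt0 h_sign mpos mneg greedy weak alpha_gt0 alpha_le t_ge.
have k_ge2R : 2 <= k%:R :> R by rewrite (ler_nat _ 2).
have t_gt0 : (0 < t)%N.
  have base_gt0 := divr_gt0 (lt_le_trans alpha_gt0 alpha_le) alpha_gt0.
  rewrite lt0n; apply/eqP => t0.
  by have := lt_le_trans (powR_gt0 _ base_gt0) t_ge; rewrite t0 ltxx.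
have gamma_le_half := WHA_gamma_le_half (weak 0%N t_gt0).
have /andP[c_ge0 _] := decay_rate_ge0_le1 k_ge2R gamma_gt0 gamma_le_half.
apply: le_trans (gini_leaves_le_decay mpos mneg k_ge2 mY gamma_gt0 h_sign greedy weak
  (leqnn t)) _.
rewrite -[t.+1%:R]natr1; apply: decay_le_of_powR_le t_ge => //.
exact: decay_rate_mul_exponent_ge1.
Qed.
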